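(* Let $\kappa$ be a field, $r,k\ge1$, $s_1,\dots,s_k\ge0$ integers, $\Gamma$ the complete bipartite supernova quiver with these parameters and $\boldsymbol\mu=(\mu^1,\dots,\mu^k)$ a $k$-tuple of nonzero partitions, $\mu^i=(\mu^i_1\ge\cdots\ge\mu^i_{s_i+1}\ge0)$, with $r\ge|\mu^i|+\mu^i_1$ for all $i$. Let $\boldsymbol\varphi$ be an indecomposable representation of $\Gamma$ over $\kappa$ of dimension vector $\mathbf{v}_{\boldsymbol\mu}$. Then (i) the maps $\varphi_\gamma$, for $\gamma$ running over the arrows $(i;j)\to(i;j-1)$ ($1\le i\le k$, $1\le j\le s_i$) of the long legs, are all injective; and (ii) for each $i=1,\dots,k$, the images of the maps $\varphi_{(l)\to(i;0)}$, $l=1,\dots,r$, span $V^{\boldsymbol\varphi}_{(i;0)}$.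
   Context: $\Gamma$ has vertices $(l)$, $l=1,\dots,r$, and $(i;j)$, $i=1,\dots,k$, $j=0,\dots,s_i$; arrows: one arrow $(l)\to(i;0)$ for each $l,i$ and one arrow $(i;j)\to(i;j-1)$ for $1\le j\le s_i$. $\mathbf{v}_{\boldsymbol\mu}$: $v_{(l)}=1$, $v_{(i;0)}=|\mu^i|$, $v_{(i;j)}=|\mu^i|-\sum_{f=1}^j\mu^i_f$. A representation $\boldsymbol\varphi$ consists of $\kappa$-vector spaces $V^{\boldsymbol\varphi}_a$ ($a$ a vertex) of dimensions $v_a$ and linear maps $\varphi_\gamma:V^{\boldsymbol\varphi}_{t(\gamma)}\to V^{\boldsymbol\varphi}_{h(\gamma)}$ for each arrow $\gamma$; it is indecomposable if it is nonzero and not isomorphic to a direct sum of two nonzero representations. *)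

From HB Require Import structures.
From mathcomp Require Import all_boot all_order all_algebra.
Set Implicit Arguments. Unset Strict Implicit. Unset Printing Implicit Defensive.
Import GRing.Theory.
Local Open Scope ring_scope.

(* A quiver is given by a vertex type V, an arrow type A and tail/head maps.
   The space at vertex a is kappa^(rdim a) (row vectors); the linear map of an
   arrow g : t g -> h g is x |-> x *m map g. *)
Record rep (K : fieldType) (V A : Type) (t h : A -> V) := Rep {
  rdim : V -> nat;
  rmap : forall g : A, 'M[K]_(rdim (t g), rdim (h g))
}.

Section RepDefs.
Variables (K : fieldType) (V A : Type) (t h : A -> V).

Definition rep_nonzero (p : rep K t h) : Prop := exists a : V, (0 < rdim p a)%N.

Definition rep_dsum (p q : rep K t h) : rep K t h :=
  @Rep K V A t h (fun a => (rdim p a + rdim q a)%N)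
    (fun g => block_mx (rmap p g) 0 0 (rmap q g)).

Definition rep_iso (p q : rep K t h) : Prop :=
  exists (f : forall a, 'M[K]_(rdim p a, rdim q a))
         (f' : forall a, 'M[K]_(rdim q a, rdim p a)),
    [/\ forall a, f a *m f' a = 1%:M,
        forall a, f' a *m f a = 1%:M &
        forall g, rmap p g *m f (h g) = f (t g) *m rmap q g].

Definition indecomposable (p : rep K t h) : Prop :=
  rep_nonzero p /\
  ~ (exists q1 q2 : rep K t h,
        [/\ rep_nonzero q1, rep_nonzero q2 & rep_iso p (rep_dsum q1 q2)]).
End RepDefs.

(* Vertices (l), l in 'I_r (0-indexed) and (i;j), i in 'I_k, j in 'I_(s i).+1. *)
Inductive sn_vertex (r k : nat) (s : 'I_k -> nat) : Type :=
| VL of 'I_r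
| VI (i : 'I_k) of 'I_(s i).+1.

Arguments sn_vertex : clear implicits.
Arguments VL {r k} s _.
Arguments VI {r k s} i _.

Inductive sn_arrow (r k : nat) (s : 'I_k -> nat) : Type :=
| AL of 'I_r & 'I_k
| AI (i : 'I_k) of 'I_(s i).

Arguments sn_arrow : clear implicits.
Arguments AL {r k} s _ _.
Arguments AI {r k s} i _.

Definition sn_tail r k s (g : sn_arrow r k s) : sn_vertex r k s :=
  match g with
  | AL l _ => VL s l
  | AI i j => VI i (lift ord0 j)
  end.

Definition sn_head r k s (g : sn_arrow r k s) : sn_vertex r k s :=
  match g with
  | AL _ i => VI i (@ord0 (s i))
  | AI i j => VI i (widen_ord (leqnSn (s i)) j)
  end.

Definition sn_rep (K : fieldType) r k s := rep K (@sn_tail r k s) (@sn_head r k s).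

(* |mu^i| for mu^i = (mu^i_1,...,mu^i_{s_i+1}) stored 0-indexed *)
Definition psize (n : nat) (m : 'I_n -> nat) : nat := (\sum_(f < n) m f)%N.

Definition is_partition (n : nat) (m : 'I_n -> nat) : Prop :=
  forall f1 f2 : 'I_n, (f1 <= f2)%N -> (m f2 <= m f1)%N.

Definition vmu r k s (mu : forall i : 'I_k, 'I_(s i).+1 -> nat)
  (a : sn_vertex r k s) : nat :=
  match a with
  | VL _ => 1%N
  | VI i j => (psize (mu i) - \sum_(f < (s i).+1 | (f < j)%N) mu i f)%N
  end.

From HB Require Import structures.
From mathcomp Require Import all_boot all_order all_algebra.
Import GRing.Theory.
Local Open Scope ring_scope.

Set Implicit Arguments. Unset Strict Implicit. Unset Printing Implicit Defensive.

(* If a map of a leg had a nonzero kernel vector, or the arrows (l) -> (i;0)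
   did not span V_(i;0), one finds on the leg i a string summand: a vector w at
   a vertex T whose images w_n at the vertices c <= n <= T are nonzero, together
   with a functional f at c that is 1 on w_c, vanishes on everything coming from
   above T and, when c = 0, on the images of the V_(l).  With f_n the pullback
   of f to vertex n, the rank-one maps x |-> (x f_n) w_n form an idempotent
   endomorphism of the representation.  Its complement is the identity on the spaces V_(l),
   which are nonzero, so the representation decomposes. *)

Section ImageRep.
Variables (K : fieldType) (V A : Type) (t h : A -> V).
Variables (p : rep K t h) (e : forall a, 'M[K]_(rdim p a)).
Hypothesis e_idem : forall a, e a *m e a = e a.
Hypothesis e_comm : forall g, rmap p g *m e (h g) = e (t g) *m rmap p g.

Lemma row_base_idem a : row_base (e a) *m e a = row_base (e a).
Proof.
have /submxP[X ->] : (row_base (e a) <= e a)%MS by rewrite eq_row_base.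
by rewrite -mulmxA e_idem.
Qed.

Definition image_rep : rep K t h :=
  @Rep K V A t h (fun a => \rank (e a))
    (fun g => row_base (e (t g)) *m rmap p g *m pinvmx (row_base (e (h g)))).

Lemma image_rep_comm g :
  rmap image_rep g *m row_base (e (h g)) = row_base (e (t g)) *m rmap p g.
Proof.
rewrite /= mulmxKpV // eq_row_base -row_base_idem -mulmxA -e_comm mulmxA.
exact: submxMl.
Qed.

End ImageRep.

Section IdempotentSplitting.
Variables (K : fieldType) (V A : Type) (t h : A -> V).
Variables (p : rep K t h) (e : forall a, 'M[K]_(rdim p a)).
Hypothesis e_idem : forall a, e a *m e a = e a.
Hypothesis e_comm : forall g, rmap p g *m e (h g) = e (t g) *m rmap p g.

Let e' a : 'M[K]_(rdim p a) := 1%:M - e a.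

Let e'_idem a : e' a *m e' a = e' a.
Proof. by rewrite /e' mulmxBl mul1mx mulmxBr mulmx1 e_idem subrr subr0. Qed.

Let e'_comm g : rmap p g *m e' (h g) = e' (t g) *m rmap p g.
Proof. by rewrite /e' mulmxBr mulmxBl mulmx1 mul1mx e_comm. Qed.

Let e'_e a : e' a *m e a = 0.
Proof. by rewrite /e' mulmxBl mul1mx e_idem subrr. Qed.

Let e_e' a : e a *m e' a = 0.
Proof. by rewrite /e' mulmxBr mulmx1 e_idem subrr. Qed.

Let row_base_e_e' a : row_base (e a) *m e' a = 0.
Proof. by rewrite -(row_base_idem e_idem) -mulmxA e_e' mulmx0. Qed.

Let row_base_e'_e a : row_base (e' a) *m e a = 0.
Proof. by rewrite -(row_base_idem e'_idem) -mulmxA e'_e mulmx0. Qed.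

Lemma idempotent_not_indecomposable :
  (exists a, e a != 0) -> (exists a, 1%:M - e a != 0) -> ~ indecomposable p.
Proof.
move=> [a1 e_a1] [a2 e'_a2] [_]; apply.
exists (image_rep e), (image_rep e'); split.
- by exists a1; rewrite /= lt0n mxrank_eq0.
- by exists a2; rewrite /= lt0n mxrank_eq0.
pose f' a := col_mx (row_base (e a)) (row_base (e' a)).
pose f a := row_mx (e a *m pinvmx (row_base (e a))) (e' a *m pinvmx (row_base (e' a))).
have ff' a : f a *m f' a = 1%:M.
  by rewrite mul_row_col !mulmxKpV ?eq_row_base // addrC subrK.
have f'f a : f' a *m f a = 1%:M.
  rewrite mul_col_row !(mulmxA (row_base _)) row_base_e_e' row_base_e'_e !mul0mx.
  rewrite (row_base_idem e_idem) (row_base_idem e'_idem) !mulmxVp ?row_base_free //.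
  by rewrite -scalar_mx_block.
exists f, f'; split => // g.
have f'_comm : f' (t g) *m rmap p g = rmap (rep_dsum (image_rep e) (image_rep e')) g *m f' (h g).
  rewrite /= mul_col_mx mul_block_col !mul0mx addr0 add0r.
  by rewrite (image_rep_comm e_idem e_comm) (image_rep_comm e'_idem e'_comm).
rewrite -[LHS]mul1mx -(ff' (t g)) -mulmxA (mulmxA _ (rmap p g)) f'_comm.
by rewrite -!mulmxA f'f mulmx1.
Qed.

End IdempotentSplitting.

Lemma mulmx_castmx (K : fieldType) m m' n n' q q' (em : m = m') (en : n = n') (eq_q : q = q')
    (X : 'M[K]_(m, n)) (Y : 'M[K]_(n, q)) :
  castmx (em, en) X *m castmx (en, eq_q) Y = castmx (em, eq_q) (X *m Y).
Proof. by case: m' / em; case: n' / en; case: q' / eq_q. Qed.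

Lemma row_free_castmx (K : fieldType) m m' n n' (e : (m = m') * (n = n')) (X : 'M[K]_(m, n)) :
  row_free (castmx e X) = row_free X.
Proof. by case: e => em en; case: m' / em; case: n' / en; rewrite castmx_id. Qed.

Lemma notsubmx_separating (K : fieldType) m n (v : 'rV[K]_n) (B : 'M[K]_(m, n)) :
  ~~ (v <= B)%MS -> exists f : 'cV[K]_n, v *m f = 1%:M /\ B *m f = 0.
Proof.
rewrite submxE => /rV0Pn[j vj].
set u := v *m cokermx B in vj.
exists (cokermx B *m ((u 0 j)^-1 *: delta_mx j 0)); split.
  rewrite mulmxA -/u -scalemxAr -colE; apply/matrixP => a b.
  by rewrite !ord1 [RHS]mxE eqxx mxE [col _ _ _ _]mxE mulVf.
by rewrite mulmxA mulmx_coker mul0mx.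
Qed.

Lemma sub_sums_genmx_lincomb (K : fieldType) (I : finType) (m : I -> nat) n
    (B : forall l, 'M[K]_(m l, n)) (x : 'rV[K]_n) :
  (x <= \sum_l <<B l>>)%MS -> exists y : forall l, 'rV[K]_(m l), x = \sum_l y l *m B l.
Proof.
move=> /sub_sumsmxP[u ->].
exists (fun l => u l *m (<<B l>>%MS *m pinvmx (B l))).
by apply: eq_bigr => l _; rewrite -mulmxA mulmxKpV // genmxE.
Qed.

Section StringIdempotent.
Variables (K : fieldType) (D : nat -> nat) (A : forall n, 'M[K]_(D n.+1, D n)).

(* [chain_mx a b] is the composite A (b-1) ... A a from D b down to D a; it is
   a meaningless [conform_mx] when b < a. *)
Fixpoint chain_mx (a b : nat) : 'M[K]_(D b, D a) :=
  if b is b'.+1 then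
    if (a <= b')%N then A b' *m chain_mx a b' else conform_mx 0 (1%:M : 'M_(D a))
  else conform_mx 0 (1%:M : 'M_(D a)).

Lemma chain_mx_id a : chain_mx a a = 1%:M.
Proof. by case: a => [|a] /=; rewrite ?ltnn conform_mx_id. Qed.

Lemma chain_mxS a b : (a <= b)%N -> chain_mx a b.+1 = A b *m chain_mx a b.
Proof. by move=> /= ->. Qed.

Lemma mul_chain_mx a b c :
  (a <= b)%N -> (b <= c)%N -> chain_mx b c *m chain_mx a b = chain_mx a c.
Proof.
move=> le_ab; elim: c => [|c IHc] le_bc.
  move: le_bc le_ab; rewrite leqn0 => /eqP->; rewrite leqn0 => /eqP->.
  by rewrite chain_mx_id mul1mx.
case: (ltngtP b c.+1) le_bc => // [lt_bc _|-> _]; last by rewrite chain_mx_id mul1mx.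
by rewrite !chain_mxS // ?(leq_trans le_ab) // -mulmxA IHc.
Qed.

Variables (c T : nat) (w : 'rV[K]_(D T)) (f : 'cV[K]_(D c)).
Hypothesis le_cT : (c <= T)%N.
Hypothesis wf : w *m chain_mx c T *m f = 1%:M.

Definition string_idem n : 'M[K]_(D n) :=
  if (c <= n <= T)%N then (chain_mx c n *m f) *m (w *m chain_mx n T) else 0.

Lemma string_idem_idem n : string_idem n *m string_idem n = string_idem n.
Proof.
rewrite /string_idem; case: ifP => [/andP[le_cn le_nT]|_]; last by rewrite mulmx0.
have wf_n : (w *m chain_mx n T) *m (chain_mx c n *m f) = 1%:M.
  by rewrite -!mulmxA (mulmxA (chain_mx n T)) mul_chain_mx // mulmxA.
by rewrite mulmxA -(mulmxA _ (w *m _)) wf_n mulmx1.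
Qed.

Lemma string_idem_bottom : string_idem c = f *m (w *m chain_mx c T).
Proof. by rewrite /string_idem leqnn le_cT chain_mx_id mul1mx. Qed.

Lemma string_idem_comm n : n.+1 != c -> (n = T -> chain_mx c T.+1 *m f = 0) ->
  A n *m string_idem n = string_idem n.+1 *m A n.
Proof.
move=> Sn_neq_c top; rewrite /string_idem.
case: (leqP c n) => [le_cn|lt_nc]; last first.
  have lt_Snc : (n.+1 < c)%N by rewrite ltn_neqAle Sn_neq_c.
  by rewrite (leqNgt c n.+1) lt_Snc mulmx0 mul0mx.
rewrite (leq_trans le_cn (leqnSn n)) !andTb.
case: (ltngtP n T) => [lt_nT|_|eq_nT]; last 2 first.
- by rewrite mulmx0 mul0mx.
- by rewrite !mulmxA -chain_mxS // eq_nT top // !mul0mx.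
rewrite chain_mxS // -(mul_chain_mx (leqnSn n) lt_nT) chain_mxS // chain_mx_id.
by rewrite mulmx1 !mulmxA.
Qed.

Lemma string_idem_neq0 : string_idem c != 0.
Proof.
rewrite string_idem_bottom; apply/eqP => f_w0.
have : w *m chain_mx c T *m (f *m (w *m chain_mx c T)) *m f = 0.
  by rewrite f_w0 mulmx0 mul0mx.
by rewrite mulmxA wf mul1mx wf => /eqP; rewrite -[1%:M]/(1 : 'M[K]_1) oner_eq0.
Qed.

End StringIdempotent.

Section Leg.
Variables (K : fieldType) (r k : nat) (s : 'I_k -> nat).
Variables (p : @sn_rep K r k s) (i : 'I_k).

(* [leg_ord 0] is [ord0] itself, so that [leg_dim 0] is convertible to the
   dimension at (i;0), the head of the arrows (l) -> (i;0). *)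
Definition leg_ord n : 'I_(s i).+1 := if n is n'.+1 then inord n'.+1 else ord0.

Lemma leg_ordK n : (n <= s i)%N -> val (leg_ord n) = n.
Proof. by case: n => // n le_n; rewrite /= inordK. Qed.

Definition leg_dim n := rdim p (VI i (leg_ord n)).

Lemma leg_dim_tail (j : 'I_(s i)) : rdim p (VI i (lift ord0 j)) = leg_dim j.+1.
Proof.
by rewrite /leg_dim; congr (rdim p (VI i _)); apply: val_inj; rewrite /= inordK ?ltnS // lift0.
Qed.

Lemma leg_dim_head (j : 'I_(s i)) :
  rdim p (VI i (widen_ord (leqnSn (s i)) j)) = leg_dim j.
Proof.
by rewrite /leg_dim; congr (rdim p (VI i _)); apply: val_inj; rewrite leg_ordK // ltnW.
Qed.

Definition leg_mx n : 'M[K]_(leg_dim n.+1, leg_dim n) :=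
  if @idP (n < s i)%N is ReflectT lt_n then
    castmx (leg_dim_tail (Ordinal lt_n), leg_dim_head (Ordinal lt_n))
      (rmap p (AI i (Ordinal lt_n)))
  else 0.

Lemma leg_mxE (j : 'I_(s i)) :
  leg_mx j = castmx (leg_dim_tail j, leg_dim_head j) (rmap p (AI i j)).
Proof.
case: j => j lt_j; rewrite /leg_mx.
destruct (@idP (@nat_of_ord _ (Ordinal lt_j) < s i)%N) as [lt_j'|]; last by [].
by rewrite (bool_irrelevance lt_j' lt_j).
Qed.

Lemma leg_dim_vertex (i' : 'I_k) (n : 'I_(s i').+1) :
  i' = i -> leg_dim n = rdim p (VI i' n).
Proof.
move=> ii; subst i'; rewrite /leg_dim; congr (rdim p (VI i _)); apply: val_inj.
by rewrite leg_ordK // -ltnS.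
Qed.

Definition leg_extend (E : forall n, 'M[K]_(leg_dim n)) (a : sn_vertex r k s) :
    'M[K]_(rdim p a) :=
  match a with
  | VL _ => 0
  | VI i' n =>
      if i' =P i is ReflectT ii then
        castmx (leg_dim_vertex n ii, leg_dim_vertex n ii) (E n)
      else 0
  end.

Lemma leg_extend_leg E (n : 'I_(s i).+1) m (nm : val n = m)
    (Dm : leg_dim m = rdim p (VI i n)) :
  leg_extend E (VI i n) = castmx (Dm, Dm) (E m).
Proof.
rewrite /leg_extend; case: eqP => // ii; subst m.
by congr castmx; congr pair; apply: eq_irrelevance.
Qed.

Lemma leg_extend_off E (i' : 'I_k) (n : 'I_(s i').+1) :
  i' != i -> leg_extend E (VI i' n) = 0.
Proof. by rewrite /leg_extend; case: eqP. Qed.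

Hypothesis r_gt0 : (0 < r)%N.
Hypothesis VL_gt0 : forall l, (0 < rdim p (VL s l))%N.

Lemma leg_idempotent_not_indecomposable (E : forall n, 'M[K]_(leg_dim n)) :
  (forall n, E n *m E n = E n) ->
  (forall n, (n < s i)%N -> leg_mx n *m E n = E n.+1 *m leg_mx n) ->
  (forall l, rmap p (AL s l i) *m E 0%N = 0) ->
  (exists2 n, (n <= s i)%N & E n != 0) ->
  ~ indecomposable p.
Proof.
move=> E_idem E_comm E_AL [n le_n En_neq0].
apply: (@idempotent_not_indecomposable _ _ _ _ _ p (leg_extend E)).
- case=> [l|i' n']; first by rewrite mulmx0.
  have [ii|ii] := eqVneq i' i; last by rewrite leg_extend_off // mulmx0.
  subst i'.
  by rewrite (leg_extend_leg _ erefl (leg_dim_vertex n' erefl)) mulmx_castmx E_idem.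
- case=> [l i'|i' j].
    have [ii|ii] := eqVneq i' i; last by rewrite leg_extend_off // mulmx0 mul0mx.
    subst i'.
    by rewrite (leg_extend_leg _ erefl erefl) castmx_id E_AL mul0mx.
  have [ii|ii] := eqVneq i' i; last by rewrite !leg_extend_off // mulmx0 mul0mx.
  subst i'.
  rewrite (@leg_extend_leg _ (widen_ord _ j) j erefl (esym (leg_dim_head j))).
  rewrite (@leg_extend_leg _ (lift ord0 j) j.+1 (lift0 _) (esym (leg_dim_tail j))).
  apply: (can_inj (castmxK (leg_dim_tail j) (leg_dim_head j))).
  rewrite -(mulmx_castmx _ (leg_dim_head j)) -(mulmx_castmx _ (leg_dim_tail j)).
  by rewrite !castmxKV -leg_mxE E_comm.
- by exists (VI i (leg_ord n)); rewrite (leg_extend_leg _ (leg_ordK le_n) erefl) castmx_id.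
- exists (VL s (Ordinal r_gt0)); rewrite /= subr0 -mxrank_eq0 mxrank1 -lt0n.
  exact: VL_gt0.
Qed.

Lemma string_not_indecomposable c T (w : 'rV[K]_(leg_dim T)) (f : 'cV[K]_(leg_dim c)) :
  (c <= T <= s i)%N ->
  w *m chain_mx leg_mx c T *m f = 1%:M ->
  ((T < s i)%N -> chain_mx leg_mx c T.+1 *m f = 0) ->
  (forall n, n.+1 = c -> leg_mx n *m string_idem leg_mx w f n
                         = string_idem leg_mx w f n.+1 *m leg_mx n) ->
  (forall l, rmap p (AL s l i) *m string_idem leg_mx w f 0 = 0) ->
  ~ indecomposable p.
Proof.
move=> /andP[le_cT le_Ts] wf top bottom E_AL.
apply: (@leg_idempotent_not_indecomposable (string_idem leg_mx w f)) => //.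
- exact: string_idem_idem.
- move=> n lt_n; have [Sn_c|Sn_neq_c] := eqVneq n.+1 c; first exact: bottom.
  by apply: string_idem_comm => // nT; apply: top; rewrite -nT.
- by exists c; [apply: leq_trans le_Ts | apply: string_idem_neq0].
Qed.

Lemma leg_mx_row_free (j : 'I_(s i)) : indecomposable p -> row_free (leg_mx j).
Proof.
move=> p_indec; apply/inj_row_free => x x_ker; apply/eqP/negPn/negP => x_neq0.
pose c := j.+1.
pose P T := (c <= T <= s i)%N && (x <= chain_mx leg_mx c T)%MS.
have Pc : P c by rewrite /P leqnn ltn_ord chain_mx_id submx1.
have P_le T : P T -> (T <= s i)%N by case/andP=> /andP[].
case: (ex_maxnP (ex_intro P c Pc) P_le) => T /andP[cTs /submxP[w xE]] T_max.
have [f [xf top]] : exists f : 'cV[K]_(leg_dim c),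
    x *m f = 1%:M /\ ((T < s i)%N -> chain_mx leg_mx c T.+1 *m f = 0).
  have [lt_Ts|le_sT] := ltnP T (s i).
    have /notsubmx_separating[f [xf ?]] : ~~ (x <= chain_mx leg_mx c T.+1)%MS.
      apply/negP => x_sub; suff /T_max : P T.+1 by rewrite ltnn.
      by rewrite /P x_sub lt_Ts (leq_trans (andP cTs).1).
    by exists f.
  have /notsubmx_separating[f [xf _]] : ~~ (x <= (0 : 'M[K]_(leg_dim c)))%MS.
    by rewrite submx0.
  by exists f; split=> // /leq_gtF; rewrite le_sT.
apply: (string_not_indecomposable (w := w) cTs _ top _ _ p_indec).
  by rewrite -xE.
- move=> n [nj]; subst n; rewrite string_idem_bottom ?(andP cTs).1 -?xE //.
  by rewrite /string_idem ltnn mulmx0 -mulmxA x_ker mulmx0.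
- by move=> l; rewrite /string_idem /= mulmx0.
Qed.

Lemma leg_base_row_full :
  indecomposable p ->
  (1%:M <= \sum_(l < r) <<rmap p (AL s l i) : 'M_(rdim p (VL s l), leg_dim 0)>>)%MS.
Proof.
move=> p_indec; set U := (\sum_(l < r) _)%MS; apply/negPn/negP => U_not_full.
pose P T := (T <= s i)%N && ~~ (chain_mx leg_mx 0 T <= U)%MS.
have P0 : P 0%N by rewrite /P leq0n chain_mx_id U_not_full.
have P_le T : P T -> (T <= s i)%N by case/andP.
case: (ex_maxnP (ex_intro P 0%N P0) P_le) => T /andP[le_Ts /row_subPn[q q_notU]] T_max.
have [f [wf Uf]] := notsubmx_separating q_notU.
have AL_f l : rmap p (AL s l i) *m f = 0.
  have /submxP[X ->] : (rmap p (AL s l i) <= U)%MS by rewrite (sumsmx_sup l) ?genmxE.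
  by rewrite -mulmxA Uf mulmx0.
apply: (string_not_indecomposable (c := 0%N) (w := delta_mx 0 q) (f := f) _ _ _ _ _ p_indec).
- by [].
- by rewrite -rowE.
- move=> lt_Ts; have /submxP[X ->] : (chain_mx leg_mx 0 T.+1 <= U)%MS.
    apply/negPn/negP => notU; suff /T_max : P T.+1 by rewrite ltnn.
    by rewrite /P lt_Ts.
  by rewrite -mulmxA Uf mulmx0.
- by [].
- by move=> l; rewrite string_idem_bottom // (mulmxA (rmap _ _)) AL_f mul0mx.
Qed.

End Leg.

Theorem proposition3p8 (K : fieldType) (r k : nat) (s : 'I_k -> nat)
  (mu : forall i : 'I_k, 'I_(s i).+1 -> nat) :
  (0 < r)%N -> (0 < k)%N ->
  (forall i, is_partition (mu i)) ->
  (forall i, (0 < psize (mu i))%N) ->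
  (forall i, (psize (mu i) + mu i ord0 <= r)%N) ->
  forall phi : @sn_rep K r k s,
  (forall a, rdim phi a = vmu mu a) ->
  indecomposable phi ->
  (forall (i : 'I_k) (j : 'I_(s i)),
      injective (fun x : 'rV[K]_(rdim phi (VI i (lift ord0 j))) =>
                   x *m rmap phi (AI i j))) /\
  (forall (i : 'I_k) (x : 'rV[K]_(rdim phi (VI i (@ord0 (s i))))),
      exists y : forall l : 'I_r, 'rV[K]_(rdim phi (VL s l)),
        x = \sum_(l < r) (y l *m rmap phi (AL s l i)
                           : 'rV[K]_(rdim phi (VI i (@ord0 (s i)))))).
Proof.
move=> r_gt0 _ _ _ _ phi dim_phi phi_indec.
have VL_gt0 l : (0 < rdim phi (VL s l))%N by rewrite dim_phi.
split=> [i j | i x].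
- apply: row_free_inj.
  rewrite -(row_free_castmx (leg_dim_tail phi j, leg_dim_head phi j)) -leg_mxE.
  exact: leg_mx_row_free.
- apply: sub_sums_genmx_lincomb; apply: submx_trans (submx1 x) _.
  exact: leg_base_row_full.
Qed.
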